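(* Let $t \geq 1$ be an integer and let $\mathcal{F}$ be a non-empty finite $t$-symmetric family of finite sets. Then \[\beta(\mathcal{F},t) = \frac{l(\mathcal{F},t)}{|\mathcal{F}|}.\]
   Context: A family $\mathcal{F}$ is $t$-symmetric if there is a group $\Gamma$ of bijections $\mathcal{F} \to \mathcal{F}$ such that for any $A, B \in \mathcal{F}$: (a) there exists $\delta \in \Gamma$ with $B = \delta(A)$; (b) if $|A \cap B| \geq t$ then $|\gamma(A) \cap \gamma(B)| \geq t$ for all $\gamma \in \Gamma$. A family $\mathcal{A}$ is $t$-intersecting if $|A \cap B| \geq t$ for all $A, B \in \mathcal{A}$ with $A \neq B$; $l(\mathcal{F},t)$ is the size of a largest $t$-intersecting sub-family of $\mathcal{F}$. For a family $\mathcal{A}$, $\mathcal{A}^{t,+} = \{A \in \mathcal{A} : |A \cap B| \geq t \text{ for all } B \in \mathcal{A}\setminus\{A\}\}$ and $\mathcal{A}^{t,-} = \mathcal{A} \setminus \mathcal{A}^{t,+}$. For $\mathcal{A} \subseteq \mathcal{F}$, $\beta(\mathcal{F},t,\mathcal{A}) = \frac{l(\mathcal{F},t) - |\mathcal{A}^{t,+}|}{|\mathcal{A}^{t,-}|}$ if $\mathcal{A}^{t,-} \neq \emptyset$, and $\frac{l(\mathcal{F},t)}{|\mathcal{F}|}$ otherwise; $\beta(\mathcal{F},t) = \min_{\mathcal{A} \subseteq \mathcal{F}} \beta(\mathcal{F},t,\mathcal{A})$. *)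

From HB Require Import structures.
From mathcomp Require Import all_boot all_order all_algebra all_fingroup.
Set Implicit Arguments. Unset Strict Implicit. Unset Printing Implicit Defensive.
Import Order.TTheory GRing.Theory Num.Theory.

(* A finite family of finite sets is modelled as F : {set {set T}} for a
   finite ground type T (the union of the members of F). *)

Local Open Scope ring_scope.
Section Defs.
Variable T : finType.

Definition memF (F : {set {set T}}) := {A : {set T} | A \in F}.

Definition t_intersecting (t : nat) (A : {set {set T}}) : bool :=
  [forall X in A, forall Y in A, (X != Y) ==> (t <= #|X :&: Y|)%N].

Definition lFt (F : {set {set T}}) (t : nat) : nat :=
  \max_(A in powerset F | t_intersecting t A) #|A|.

Definition Aplus (t : nat) (A : {set {set T}}) : {set {set T}} :=
  [set X in A | [forall Y in A, (Y != X) ==> (t <= #|X :&: Y|)%N]].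
Definition Aminus (t : nat) (A : {set {set T}}) : {set {set T}} :=
  A :\: Aplus t A.

Definition betaA (F : {set {set T}}) (t : nat) (A : {set {set T}}) : rat :=
  if Aminus t A != set0 then
    ((lFt F t)%:R - (#|Aplus t A|)%:R) / (#|Aminus t A|)%:R
  else (lFt F t)%:R / (#|F|)%:R.

(* beta(F,t) = min over subfamilies A of F (set0 is among them, so the
   seed value is attained). *)
Definition betaF (F : {set {set T}}) (t : nat) : rat :=
  \big[Num.min/betaA F t set0]_(A : {set {set T}} | A \subset F) betaA F t A.

Definition t_symmetric (t : nat) (F : {set {set T}}) : Prop :=
  exists G : {group {perm memF F}},
    (forall A B : memF F, exists2 g, g \in G & B = g A) /\
    (forall A B : memF F, (t <= #|val A :&: val B|)%N ->
       forall g, g \in G -> (t <= #|val (g A) :&: val (g B)|)%N).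

End Defs.

From HB Require Import structures.
From mathcomp Require Import all_boot all_order all_algebra all_fingroup.
From mathcomp Require Import lra.
Set Implicit Arguments. Unset Strict Implicit. Unset Printing Implicit Defensive.
Import Order.TTheory GRing.Theory Num.Theory.
(* Let L be a largest t-intersecting subfamily of F and A a subfamily.  For
   every symmetry g, the members of A^{t,+} meet all members of A, and g(L) is
   again t-intersecting, so A^{t,+} together with the members of g(L) lying in
   A^{t,-} is t-intersecting: |A^{t,+}| + |g(L) ∩ A^{t,-}| <= l(F,t).  By
   transitivity each member of F lies in g(L) for the same proportion
   l(F,t)/|F| of the symmetries g, so averaging over the group gives
   |A^{t,+}| + |A^{t,-}| l(F,t)/|F| <= l(F,t), i.e. beta(F,t,A) >= l(F,t)/|F|.
   The empty subfamily attains this value. *)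

Lemma card_setId_sum (U : finType) (C : {set U}) (P : pred U) :
  #|[set x in C | P x]| = (\sum_(x in C) P x).
Proof.
rewrite -sum1_card big_mkcond [RHS]big_mkcond; apply: eq_bigr => x _.
by rewrite inE; case: (x \in C); case: (P x).
Qed.

Section TransitiveAveraging.

Variables (S : finType) (G : {group {perm S}}).
Hypothesis transG : forall x y : S, exists2 g, g \in G & y = g x.

Lemma card_translates_leq (L : {set S}) (x y : S) :
  #|[set g in G | x \in g @: L]| <= #|[set g in G | y \in g @: L]|.
Proof.
have [k kG ->] := transG x y.
rewrite -(card_imset _ (mulIg k)); apply: subset_leq_card.
apply/subsetP => h /imsetP [g]; rewrite !inE => /andP [gG /imsetP [z zL ->]] ->.
by rewrite groupM //=; apply/imsetP; exists z; rewrite ?permM.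
Qed.

Lemma card_translates_const (L : {set S}) (x y : S) :
  #|[set g in G | x \in g @: L]| = #|[set g in G | y \in g @: L]|.
Proof. by apply/eqP; rewrite eqn_leq !card_translates_leq. Qed.

Lemma sum_card_translatesI (L B : {set S}) :
  \sum_(g in G) #|g @: L :&: B| = \sum_(x in B) #|[set g in G | x \in g @: L]|.
Proof.
under eq_bigr => g _ do rewrite setIC card_setId_sum.
rewrite exchange_big; apply: eq_bigr => x _.
by rewrite card_setId_sum.
Qed.

Lemma card_mul_translates (L : {set S}) (x : S) :
  #|S| * #|[set g in G | x \in g @: L]| = #|G| * #|L|.
Proof.
rewrite -cardsT -sum_nat_const.
under eq_bigr => y _ do rewrite (card_translates_const L x y).
rewrite -sum_card_translatesI -sum_nat_const; apply: eq_bigr => g _.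
by rewrite setIT card_imset //; apply: perm_inj.
Qed.

Lemma average_card_translatesI (L B : {set S}) :
  #|S| * \sum_(g in G) #|g @: L :&: B| = #|B| * (#|G| * #|L|).
Proof.
rewrite sum_card_translatesI big_distrr /= -sum_nat_const.
by apply: eq_bigr => x _; rewrite card_mul_translates.
Qed.

End TransitiveAveraging.

Section Families.

Variables (T : finType) (t : nat).
Implicit Types (F A B L : {set {set T}}).

Lemma t_intersectingP A :
  reflect (forall X Y, X \in A -> Y \in A -> X != Y -> (t <= #|X :&: Y|))
          (t_intersecting t A).
Proof.
apply: (iffP forall_inP) => [H X Y XA YA XY | H X XA].
  by move/forall_inP: (H X XA) => /(_ Y YA) /implyP; apply.
by apply/forall_inP => Y YA; apply/implyP; apply: H.
Qed.

Lemma t_intersectingS A B : B \subset A -> t_intersecting t A -> t_intersecting t B.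
Proof.
move=> sBA /t_intersectingP tA; apply/t_intersectingP => X Y XB YB.
by apply: tA; apply: (subsetP sBA).
Qed.

Lemma AplusP A X :
  reflect (X \in A /\ forall Y, Y \in A -> Y != X -> (t <= #|X :&: Y|))
          (X \in Aplus t A).
Proof.
rewrite inE; apply: (iffP andP) => [[XA /forall_inP H] | [XA H]].
  by split=> // Y YA; apply/implyP/H.
by split=> //; apply/forall_inP => Y YA; apply/implyP/H.
Qed.

Lemma Aplus_sub A : Aplus t A \subset A.
Proof. by apply/subsetP => X /AplusP []. Qed.

Lemma t_intersecting_AplusU A B :
  B \subset A -> t_intersecting t B -> t_intersecting t (Aplus t A :|: B).
Proof.
move=> sBA /t_intersectingP tB; apply/t_intersectingP => X Y.
have inA Z : Z \in Aplus t A :|: B -> Z \in A.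
  by case/setUP => [/(subsetP (Aplus_sub A)) | /(subsetP sBA)].
move=> XU YU XY; case/setUP: (XU) => [/AplusP [_ HX] | XB].
  by apply: HX (inA _ YU) _; rewrite eq_sym.
case/setUP: (YU) => [/AplusP [_ HY] | YB]; last exact: tB.
by rewrite setIC; apply: HY (inA _ XU) _.
Qed.

Lemma leq_card_lFt F L : L \subset F -> t_intersecting t L -> (#|L| <= lFt F t).
Proof.
move=> sLF tL; apply: (@leq_bigmax_cond _ _ (fun B => #|B|)).
by rewrite powersetE sLF.
Qed.

Lemma lFt_attained F :
  {L : {set {set T}} | (L \subset F) && t_intersecting t L & lFt F t = #|L|}.
Proof.
pose P := [pred B : {set {set T}} | (B \in powerset F) && t_intersecting t B].
have [|L] := @eq_bigmax_cond _ P (fun B => #|B|).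
  apply/card_gt0P; exists set0; rewrite inE /= powersetE sub0set.
  by apply/t_intersectingP => X Y; rewrite inE.
by rewrite inE /= powersetE => ? ?; exists L.
Qed.

Definition liftF F B : {set memF F} := [set X : memF F | val X \in B].

Lemma card_liftF F B : B \subset F -> #|liftF F B| = #|B|.
Proof.
move=> sBF; rewrite -(card_imset _ val_inj).
suff -> : val @: liftF F B = B by [].
apply/setP => X; apply/imsetP/idP => [[Y] | XB]; first by rewrite inE => ? ->.
by exists (Sub X (subsetP sBF X XB) : memF F); rewrite ?inE.
Qed.

Lemma card_memF F : #|{: memF F}| = #|F|.
Proof. by rewrite card_sig; apply: eq_card. Qed.

Section Symmetric.

Variables (F : {set {set T}}) (G : {group {perm memF F}}).
Hypothesis transG : forall X Y : memF F, exists2 g, g \in G & Y = g X.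
Hypothesis presG : forall X Y : memF F, (t <= #|val X :&: val Y|) ->
  forall g, g \in G -> (t <= #|val (g X) :&: val (g Y)|).

Lemma t_intersecting_translate g L :
  g \in G -> t_intersecting t L -> t_intersecting t (val @: (g @: liftF F L)).
Proof.
move=> gG /t_intersectingP tL; apply/t_intersectingP => X Y.
move=> /imsetP [gU /imsetP [U UL ->] ->] /imsetP [gV /imsetP [V VL ->] ->] gUV.
rewrite !inE in UL VL; apply: presG gG; apply: tL => //.
by apply: contraNneq gUV => /val_inj ->.
Qed.

Lemma card_Aplus_translate_le A L g :
  A \subset F -> L \subset F -> t_intersecting t L -> g \in G ->
  #|Aplus t A| + #|g @: liftF F L :&: liftF F (Aminus t A)| <= lFt F t.
Proof.
move=> sAF sLF tL gG.
set K := val @: (g @: liftF F L :&: liftF F (Aminus t A)).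
have sKAm : K \subset Aminus t A.
  by apply/subsetP => X /imsetP [Y]; rewrite !inE => /andP [_ YAm] ->.
have sKA : K \subset A by apply: subset_trans sKAm (subsetDl _ _).
have tK : t_intersecting t K.
  exact: t_intersectingS (imsetS _ (subsetIl _ _)) (t_intersecting_translate gG tL).
have dK : [disjoint Aplus t A & K].
  by rewrite -setI_eq0 -subset0; apply/subsetP => X /setIP [XAp /(subsetP sKAm)]; rewrite inE XAp.
have cardU : #|Aplus t A :|: K| = (#|Aplus t A| + #|K|).
  by apply/eqP; rewrite (leq_card_setU _ _).2.
rewrite -[#|_ :&: _|](card_imset _ val_inj) -/K -cardU.
apply: leq_card_lFt (t_intersecting_AplusU sKA tK).
by rewrite subUset (subset_trans (Aplus_sub A) sAF) (subset_trans sKA sAF).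
Qed.

Lemma card_Aplus_Aminus_le A : A \subset F ->
  #|F| * #|Aplus t A| + #|Aminus t A| * lFt F t <= #|F| * lFt F t.
Proof.
move=> sAF; have [L /andP [sLF tL] lL] := lFt_attained F.
set Am := liftF F (Aminus t A).
have sum_le : #|G| * #|Aplus t A| + \sum_(g in G) #|g @: liftF F L :&: Am|
               <= #|G| * lFt F t.
  rewrite -!sum_nat_const -big_split /=; apply: leq_sum => g gG.
  exact: card_Aplus_translate_le.
have sAmF : Aminus t A \subset F by apply: subset_trans (subsetDl _ _) sAF.
have avg := average_card_translatesI transG (liftF F L) Am.
rewrite card_memF /Am !card_liftF // -lL in avg.
have := leq_mul (leqnn #|F|) sum_le; rewrite mulnDr avg.
rewrite !(mulnCA _ #|G|) -mulnDr leq_pmul2l //; exact: cardG_gt0.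
Qed.

End Symmetric.

End Families.

Local Open Scope ring_scope.

Lemma lFt_ratio_le_betaA (T : finType) (F A : {set {set T}}) (t : nat) :
  (0 < #|F|)%N ->
  (#|F| * #|Aplus t A| + #|Aminus t A| * lFt F t <= #|F| * lFt F t)%N ->
  (lFt F t)%:R / (#|F|)%:R <= betaA F t A.
Proof.
move=> Fpos key; rewrite /betaA; case: ifP => // Am_neq0.
have Ampos : (0 < #|Aminus t A|)%N by rewrite card_gt0.
rewrite ler_pdivlMr ?ltr0n // mulrAC ler_pdivrMr ?ltr0n // mulrBl.
move: key; rewrite -(ler_nat rat) natrD !natrM; lra.
Qed.

Theorem corollary3p9 (T : finType) (F : {set {set T}}) (t : nat) :
  (1 <= t)%N -> F != set0 -> t_symmetric t F ->
  betaF F t = (lFt F t)%:R / (#|F|)%:R.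
Proof.
move=> _ F_neq0 [G [transG presG]].
have beta0 : betaA F t set0 = (lFt F t)%:R / (#|F|)%:R.
  by rewrite /betaA /Aminus set0D eqxx.
rewrite /betaF beta0; apply: bigmin_eq_id => A sAF.
apply: lFt_ratio_le_betaA; first by rewrite card_gt0.
exact: card_Aplus_Aminus_le transG presG A sAF.
Qed.
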